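(* Let $\mathcal{A}$ be a bounded PTA with clock set $X$, let $s$ and $s'$ be symbolic states of $\mathcal{A}$, let $M\in\mathbb{N}$ with $M\ge\mathrm{maxC}(\mathcal{A})$, and let $\nu$ be a parameter valuation within the parameter domain such that $\nu(\mathrm{Ext}^X_M(s))=\nu(\mathrm{Ext}^X_M(s'))$. Then for every state $(l,v)\in\nu(s)$ there exists a state $(l,v')\in\nu(s')$ such that $(l,v)$ and $(l,v')$ are bisimilar in $\nu(\mathcal{A})$.
   Context: A PTA is $\mathcal{A}=(\Sigma,L,l_0,L_F,X,P,\mathbb{D},I,E)$: finite actions $\Sigma$, finite locations $L$, initial $l_0$, accepting $L_F$, clocks $X$ (real-valued, $\ge0$), parameters $P$, parameter domain $\mathbb{D}(p)=(\mathbb{D}^-(p),\mathbb{D}^+(p))$ with admissible values $[\mathbb{D}^-(p),\mathbb{D}^+(p)]$, invariants $I(l)$ (clock guards), and edges $(l,g,a,R,l')$ with guard $g$ and reset set $R\subseteq X$. A simple clock guard is $x\bowtie\sum_i\alpha_ip_i+z$ with $\alpha_i,z\in\mathbb{Z}$; a clock guard is a conjunction of them. $\mathcal{A}$ is bounded if all $\mathbb{D}^\pm(p)$ are finite. $G(\mathcal{A})$ is the set of simple clock guards among the conjuncts of guards and invariants. For $g: x\bowtie\sum_i\alpha_ip_i+z$, $\mathrm{maxC}(g)=\sum_i\alpha_i\gamma_i+z$ with $\gamma_i=\mathbb{D}^-(p_i)$ if $\alpha_i<0$, $\mathbb{D}^+(p_i)$ if $\alpha_i>0$, $0$ otherwise;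 $\mathrm{maxC}(\mathcal{A})=\max_{g\in G(\mathcal{A})}\mathrm{maxC}(g)$. For a parameter valuation $\nu$, $\nu(\mathcal{A})$ is the timed automaton obtained by substituting $\nu(p)$ for each $p$; its semantics is the transition system with states $(l,v)$ ($v$ satisfying $\nu(I(l))$), delay transitions $(l,v)\to(l,v+d)$ if all $(l,v+d')$, $d'\in[0,d]$, are states, and discrete transitions along edges $(l,g,a,R,l')$ from $(l,v)$ to $(l',v[R:=0])$ if $v$ satisfies $\nu(g)$ and both are states. Two states are bisimilar if related by a bisimulation of this labelled transition system. A symbolic state is $(l,C)$ with $C$ a set of valuations of $X\cup P$; $\nu(s)=\{(l,v)\mid(v,\nu)\in C\}$. Cylindrification: $\mathrm{Cyl}_x(C)=\{w\mid\exists w'\in C,\ w'(y)=w(y)\ \forall y\ne x,\ w(x)\ge0\}$. $\mathrm{Ext}^x_M(C)=(C\cap(x\le M))\cup(\mathrm{Cyl}_x(C\cap(x>M))\cap(x>M))$; $\mathrm{Ext}^X_M$ is the composition of all $\mathrm{Ext}^x_M$, $x\in X$ (order irrelevant), applied to symbolic states via their constraint. *)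

From Stdlib Require List.
From mathcomp Require Import all_boot all_order all_algebra.
From mathcomp Require Import reals.
Set Implicit Arguments. Unset Strict Implicit. Unset Printing Implicit Defensive.
Import Order.TTheory GRing.Theory Num.Theory.
Local Open Scope ring_scope.

Section PTA.
Variables (R : realType) (Sigma L X P : finType).

Inductive cmp := CLt | CLe | CEq | CGe | CGt.

Definition cmp_sem (c : cmp) (a b : R) : Prop :=
  match c with
  | CLt => a < b | CLe => a <= b | CEq => a = b | CGe => a >= b | CGt => a > b
  end.

Record sguard := SGuard {
  sg_clock : X;
  sg_cmp : cmp;
  sg_coef : P -> int;
  sg_const : int }.

Definition guard := seq sguard.

Record edge := Edge {
  e_src : L;
  e_guard : guard;
  e_act : Sigma;
  e_reset : {set X};
  e_tgt : L }.

(** A PTA (Σ, L, l0, L_F, X, P, D, I, E). Parameter-domain bounds are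
    [option R]: [None] stands for an infinite bound (-oo resp. +oo). *)
Record pta := PTA {
  p_init : L;
  p_acc : {set L};
  p_Dlo : P -> option R;
  p_Dhi : P -> option R;
  p_inv : L -> guard;
  p_edges : seq edge }.

Definition bounded (A : pta) : Prop :=
  forall p, p_Dlo A p <> None /\ p_Dhi A p <> None.

Definition in_GA (A : pta) (g : sguard) : Prop :=
  (exists l, List.In g (p_inv A l)) \/ (exists e, List.In e (p_edges A) /\ List.In g (e_guard e)).

(** maxC(g) (bounds only meaningful for a bounded PTA) *)
Definition maxC (A : pta) (g : sguard) : R :=
  \sum_(p : P)
     (sg_coef g p)%:~R *
     (if (sg_coef g p < 0)%R then odflt 0 (p_Dlo A p)
      else if (0 < sg_coef g p)%R then odflt 0 (p_Dhi A p) else 0)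
  + (sg_const g)%:~R.

Definition maxC_le (A : pta) (M : R) : Prop :=
  forall g, in_GA A g -> maxC A g <= M.

Definition in_domain (A : pta) (nu : P -> R) : Prop :=
  forall p, (forall a, p_Dlo A p = Some a -> a <= nu p) /\
            (forall b, p_Dhi A p = Some b -> nu p <= b).

Definition sguard_sat (nu : P -> R) (g : sguard) (v : X -> R) : Prop :=
  cmp_sem (sg_cmp g) (v (sg_clock g))
    (\sum_(p : P) (sg_coef g p)%:~R * nu p + (sg_const g)%:~R).

Definition guard_sat (nu : P -> R) (g : guard) (v : X -> R) : Prop :=
  forall sg, List.In sg g -> sguard_sat nu sg v.

Definition tstate := (L * (X -> R))%type.

Definition is_state (A : pta) (nu : P -> R) (s : tstate) : Prop :=
  (forall x, 0 <= s.2 x) /\ guard_sat nu (p_inv A s.1) s.2.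

Definition delay (v : X -> R) (d : R) : X -> R := fun x => v x + d.
Definition reset (v : X -> R) (Rs : {set X}) : X -> R :=
  fun x => if x \in Rs then 0 else v x.

Inductive label := LDelay of R | LAct of Sigma.

Definition trans (A : pta) (nu : P -> R) (s : tstate) (a : label) (s' : tstate)
  : Prop :=
  match a with
  | LDelay d =>
      0 <= d /\ s'.1 = s.1 /\ s'.2 = delay s.2 d /\
      (forall d', 0 <= d' <= d -> is_state A nu (s.1, delay s.2 d'))
  | LAct b =>
      exists e, List.In e (p_edges A) /\ e_src e = s.1 /\ e_act e = b /\
        e_tgt e = s'.1 /\ guard_sat nu (e_guard e) s.2 /\
        s'.2 = reset s.2 (e_reset e) /\ is_state A nu s /\ is_state A nu s'
  end.

Definition bisimulation (A : pta) (nu : P -> R) (Rel : tstate -> tstate -> Prop)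
  : Prop :=
  forall s1 s2, Rel s1 s2 ->
    (forall a s1', trans A nu s1 a s1' ->
        exists s2', trans A nu s2 a s2' /\ Rel s1' s2') /\
    (forall a s2', trans A nu s2 a s2' ->
        exists s1', trans A nu s1 a s1' /\ Rel s1' s2').

Definition bisimilar (A : pta) (nu : P -> R) (s1 s2 : tstate) : Prop :=
  exists Rel, bisimulation A nu Rel /\ Rel s1 s2.

(** symbolic states: valuations of X ∪ P are pairs (clock val., param val.) *)
Definition constr := ((X -> R) * (P -> R)) -> Prop.
Record sym_state := SymState { ss_loc : L; ss_C : constr }.

Definition sym_sem (nu : P -> R) (s : sym_state) : tstate -> Prop :=
  fun st => st.1 = ss_loc s /\ ss_C s (st.2, nu).

Definition Cyl (x : X) (C : constr) : constr :=
  fun w => (exists w', C w' /\ (forall y, y != x -> w'.1 y = w.1 y) /\ w'.2 = w.2)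
           /\ 0 <= w.1 x.

Definition Ext1 (M : R) (x : X) (C : constr) : constr :=
  fun w => (C w /\ w.1 x <= M) \/
           (Cyl x (fun w' => C w' /\ M < w'.1 x) w /\ M < w.1 x).

Definition ExtX (M : R) (C : constr) : constr :=
  foldr (Ext1 M) C (enum X).

Definition ExtS (M : R) (s : sym_state) : sym_state :=
  SymState (ss_loc s) (ExtX M (ss_C s)).

End PTA.

(** Call two clock valuations M-equivalent when every clock either has the
    same value in both or exceeds M in both.  Every constant a guard or an
    invariant of [nu(A)] compares a clock with is at most maxC(A) <= M, so no
    guard distinguishes M-equivalent valuations; as M-equivalence is preserved
    by delays and resets, it is a bisimulation.  Each [Ext^x_M] keeps its
    argument and only adds valuations M-equivalent to it, so [v] in [nu(s)]
    lies in [nu(Ext s) = nu(Ext s')] and hence is M-equivalent to some [v'] in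
    [nu(s')]. *)
From Pilot Require Import Defs.
From mathcomp Require Import all_boot all_order all_algebra.
From mathcomp Require Import reals.
From mathcomp Require Import lra.
Set Implicit Arguments. Unset Strict Implicit.
Import Order.TTheory GRing.Theory Num.Theory.
Local Open Scope ring_scope.

Section ClockEquiv.
Variables (R : realType) (X : finType) (m : R).

Definition clock_equiv (v1 v2 : X -> R) :=
  forall x, v1 x = v2 x \/ (m < v1 x /\ m < v2 x).

Lemma clock_equiv_refl v : clock_equiv v v.
Proof. by move=> x; left. Qed.

Lemma clock_equiv_sym v1 v2 : clock_equiv v1 v2 -> clock_equiv v2 v1.
Proof. by move=> E x; case: (E x) => [->|[]]; [left|right]. Qed.

Lemma clock_equiv_trans v1 v2 v3 :
  clock_equiv v1 v2 -> clock_equiv v2 v3 -> clock_equiv v1 v3.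
Proof.
move=> E12 E23 x; case: (E12 x) => [->|[h1 h2]]; first exact: E23.
by case: (E23 x) => [<-|[_ h3]]; right.
Qed.

Lemma clock_equiv_delay v1 v2 d :
  0 <= d -> clock_equiv v1 v2 -> clock_equiv (delay v1 d) (delay v2 d).
Proof.
move=> d_ge0 E x; rewrite /delay; case: (E x) => [->|[h1 h2]]; first by left.
by right; split; lra.
Qed.

Lemma clock_equiv_reset v1 v2 S :
  clock_equiv v1 v2 -> clock_equiv (reset v1 S) (reset v2 S).
Proof. by move=> E x; rewrite /reset; case: (x \in S); [left|apply: E]. Qed.

Variable P : finType.

Lemma Ext1_sub (x : X) (C : constr R X P) w :
  0 <= m -> C w -> Ext1 m x C w.
Proof.
move=> m_ge0 Cw; have [wx_le|wx_gt] := lerP (w.1 x) m; first by left.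
by right; split => //; split; [exists w | lra].
Qed.

Lemma ExtX_sub (C : constr R X P) w : 0 <= m -> C w -> ExtX m C w.
Proof.
by move=> m_ge0 Cw; rewrite /ExtX; elim: (enum X) => //= x xs IH; apply: Ext1_sub.
Qed.

Lemma Ext1_equiv (x : X) (C : constr R X P) w :
  Ext1 m x C w -> exists2 w', C w' & w'.2 = w.2 /\ clock_equiv w'.1 w.1.
Proof.
case=> [[Cw _]|[[[w' [[Cw' wx'_gt] [w'_off w'_par]]] _] wx_gt]].
  by exists w => //; split => //; apply: clock_equiv_refl.
exists w' => //; split => // y.
by have [->|y_neq] := eqVneq y x; [right | left; apply: w'_off].
Qed.

Lemma ExtX_equiv (C : constr R X P) w :
  ExtX m C w -> exists2 w', C w' & w'.2 = w.2 /\ clock_equiv w'.1 w.1.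
Proof.
rewrite /ExtX; elim: (enum X) w => [|x xs IH] w /=.
  by move=> Cw; exists w => //; split => //; apply: clock_equiv_refl.
move=> /Ext1_equiv [w1 /IH [w2 Cw2 [p21 E21]] [p1 E1]].
by exists w2 => //; split; [rewrite p21 | apply: clock_equiv_trans E1].
Qed.

End ClockEquiv.

Section GuardInvariance.
Variables (R : realType) (Sigma L X P : finType).
Variables (A : pta R Sigma L X P) (nu : P -> R) (m : R).

Definition guard_bound (g : sguard X P) : R :=
  \sum_(p : P) (sg_coef g p)%:~R * nu p + (sg_const g)%:~R.

Lemma guard_bound_le_maxC g :
  bounded A -> in_domain A nu -> guard_bound g <= Defs.maxC A g.
Proof.
move=> A_bd nu_dom; rewrite /guard_bound /maxC lerD2r; apply: ler_sum => p _.
have [nu_lo nu_hi] := nu_dom p; have [lo_fin hi_fin] := A_bd p.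
case: (ltrgt0P (sg_coef g p)) => c_sgn /=.
- case: (p_Dhi A p) nu_hi hi_fin => [b|] // nu_hi _ /=.
  by apply: ler_wpM2l; [rewrite ler0z ltW | apply: nu_hi].
- case: (p_Dlo A p) nu_lo lo_fin => [a|] // nu_lo _ /=.
  by apply: ler_wnM2l; [rewrite lerz0 ltW | apply: nu_lo].
- by rewrite c_sgn !mul0r.
Qed.

(* Above [m] every comparison with a constant [<= m] has the same outcome. *)
Lemma sguard_sat_equiv g v1 v2 :
  guard_bound g <= m -> clock_equiv m v1 v2 ->
  sguard_sat nu g v1 -> sguard_sat nu g v2.
Proof.
rewrite /sguard_sat -/(guard_bound g) => g_le E.
by case: (E (sg_clock g)) => [->|[h1 h2]] //; case: (sg_cmp g) => /=; lra.
Qed.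

Hypotheses (A_bd : bounded A) (nu_dom : in_domain A nu) (maxC_le_m : maxC_le A m).
Hypothesis m_ge0 : 0 <= m.

Lemma guard_sat_equiv (gs : guard X P) v1 v2 :
  (forall g, List.In g gs -> in_GA A g) -> clock_equiv m v1 v2 ->
  guard_sat nu gs v1 -> guard_sat nu gs v2.
Proof.
move=> gs_GA E sat1 g g_in; apply: sguard_sat_equiv E (sat1 _ g_in).
exact: le_trans (guard_bound_le_maxC _ A_bd nu_dom) (maxC_le_m (gs_GA _ g_in)).
Qed.

Lemma is_state_equiv l v1 v2 :
  clock_equiv m v1 v2 -> is_state A nu (l, v1) -> is_state A nu (l, v2).
Proof.
move=> E [/= v1_ge0 inv1]; split => /=.
  move=> x; case: (E x) => [<-|[_ v2x_gt]]; first exact: v1_ge0.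
  exact: le_trans m_ge0 (ltW v2x_gt).
by apply: guard_sat_equiv E inv1 => g g_in; left; exists l.
Qed.

Definition state_equiv (s1 s2 : tstate R L X) :=
  s1.1 = s2.1 /\ clock_equiv m s1.2 s2.2.

Lemma state_equiv_sym s1 s2 : state_equiv s1 s2 -> state_equiv s2 s1.
Proof. by case=> l_eq E; split; [rewrite l_eq | apply: clock_equiv_sym]. Qed.

Lemma state_equiv_simulation s1 s2 a s1' :
  state_equiv s1 s2 -> trans A nu s1 a s1' ->
  exists s2', trans A nu s2 a s2' /\ state_equiv s1' s2'.
Proof.
case: s1 s2 s1' => [l v1] [_ v2] [l' v1'] [/= <- E].
case: a => [d|b] /=.
- case=> [d_ge0 [-> [-> inv_path]]].
  exists (l, delay v2 d); split; last by split => //; apply: clock_equiv_delay.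
  do 3!split => //; move=> d' d'_range.
  apply: is_state_equiv (inv_path d' d'_range); apply: clock_equiv_delay E.
  by case/andP: d'_range.
- case=> [e [e_in [e_src_l [e_act_b [<- [g_sat [-> [st1 st1']]]]]]]].
  exists (e_tgt e, reset v2 (e_reset e)); split; last first.
    by split => //; apply: clock_equiv_reset.
  exists e; do 5!split => //.
    by apply: guard_sat_equiv E g_sat => g g_in; right; exists e.
  split => //; split; first exact: is_state_equiv E st1.
  exact: is_state_equiv (clock_equiv_reset _ E) st1'.
Qed.

Lemma state_equiv_bisimulation : bisimulation A nu state_equiv.
Proof.
move=> s1 s2 E12; split; first by move=> *; apply: state_equiv_simulation E12 _.
move=> a s2' /(state_equiv_simulation (state_equiv_sym E12)) [s1' [t1 E21']].
by exists s1'; split => //; apply: state_equiv_sym.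
Qed.

End GuardInvariance.

Theorem mainTheorem4 (R : realType) (Sigma L X P : finType)
  (A : pta R Sigma L X P) (s s' : sym_state R L X P) (M : nat)
  (nu : P -> R) :
  bounded A ->
  maxC_le A M%:R ->
  in_domain A nu ->
  sym_sem nu (ExtS M%:R s) = sym_sem nu (ExtS M%:R s') ->
  forall (l : L) (v : X -> R),
    sym_sem nu s (l, v) -> is_state A nu (l, v) ->
    exists v' : X -> R,
      [/\ sym_sem nu s' (l, v'), is_state A nu (l, v') &
          bisimilar A nu (l, v) (l, v')].
Proof.
move=> A_bd maxC_le_M nu_dom Ext_eq l v [l_s Cv] v_st.
have M_ge0 : 0 <= (M%:R : R) by rewrite ler0n.
have : sym_sem nu (ExtS M%:R s') (l, v).
  by rewrite -Ext_eq; split => //; apply: ExtX_sub.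
case=> [l_s' /ExtX_equiv [[v' nu'] C'v' [/= nu'_nu E]]]; subst nu'.
have E' := clock_equiv_sym E.
exists v'; split => //.
- exact: is_state_equiv A_bd nu_dom maxC_le_M M_ge0 _ _ _ E' v_st.
- exists (state_equiv M%:R); split => //.
  exact: state_equiv_bisimulation.
Qed.
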